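(* Let $n,s$ be integers with $s \geq n \geq 1$, and consider the following game played with $n$ dice, each having $s$ equally likely faces numbered $1,\dots,s$. At each turn, if $k \geq 1$ dice remain in play, all $k$ of them are rolled and every die showing the value $k$ is removed from play; the game ends when no dice remain. For a game that ends after finitely many turns, its signature is the sequence of $n$ numbers recording, for each die, the value it showed on the roll at which it was removed, listed in the order in which the dice were removed (dice removed on the same turn all show the same value, so their relative order does not matter). Then the number of distinct signatures that can arise from finite games is $2^{n-1}$.
   Context: A game is a (possibly infinite) sequence of turns as described; it is called finite if it consists of finitely many turns. The standing assumption $s \geq n$ guarantees that every value $k \in \{1,\dots,n\}$ is a face of each die. *)

From mathcomp Require Import all_boot.
Set Implicit Arguments. Unset Strict Implicit. Unset Printing Implicit Defensive.

(* A turn with k dice remaining is recorded as the sequence r (of length k) of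
   values shown by the k dice in play; each value lies in {1,...,s}. *)
Fixpoint finite_game (s k : nat) (rolls : seq (seq nat)) : bool :=
  match rolls with
  | [::] => k == 0
  | r :: rs =>
      [&& 0 < k, size r == k, all (fun v => 0 < v <= s) r
        & finite_game s (k - count_mem k r) rs]
  end.

Fixpoint signature (k : nat) (rolls : seq (seq nat)) : seq nat :=
  match rolls with
  | [::] => [::]
  | r :: rs => nseq (count_mem k r) k ++ signature (k - count_mem k r) rs
  end.

Definition is_signature (n s : nat) (sg : seq nat) : Prop :=
  exists rolls, finite_game s n rolls /\ signature n rolls = sg.

From mathcomp Require Import all_boot zify.

(* A finite game is summarised by the sequence of the positive numbers of dice
   removed at its turns, which is a composition of n; the signature depends
   only on this composition, since each removed block consists of copies of the
   number of dice still in play, and distinct compositions give distinct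
   signatures.  Every composition arises, because with k dice in play the first
   c of them may show k and the others show 1 (which differs from k when some
   die survives, as then k >= 2).  Finally, compositions of n + 1 are obtained
   from those of n either by prepending a part 1 or by incrementing the first
   part, so there are 2^(n-1) of them. *)

Definition is_composition (n : nat) (cs : seq nat) : bool :=
  all (fun c => 0 < c) cs && (sumn cs == n).

Definition incr_head (cs : seq nat) : seq nat :=
  if cs is c :: cs' then c.+1 :: cs' else cs.

Lemma incr_head_inj : injective incr_head.
Proof. by move=> [|a s] [|b t] // [-> ->]. Qed.

Fixpoint compositions (n : nat) : seq (seq nat) :=
  match n with
  | 0 => [:: [::]]
  | 1 => [:: [:: 1]] (* separate, as [incr_head [::] = [::]] *)
  | m.+1 =>
      [seq 1 :: cs | cs <- compositions m] ++ map incr_head (compositions m)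
  end.

Lemma compositionsSS n :
  compositions n.+2
  = [seq 1 :: cs | cs <- compositions n.+1]
      ++ map incr_head (compositions n.+1).
Proof. by []. Qed.

Lemma mem_compositions n cs : (cs \in compositions n) = is_composition n cs.
Proof.
elim: n cs => [|[|n] IH] cs.
- by case: cs => [|[|c] cs]; rewrite /is_composition !inE //= andbF.
- case: cs => [|[|[|c]] [|[|c'] cs]];
    by rewrite /is_composition !inE //= ?andbF.
- rewrite compositionsSS mem_cat; case: cs => [|[|[|c]] cs].
  + apply/negbTE/norP; split; apply/mapP => -[[|c cs'] //].
    by rewrite IH.
  + apply/negbTE/norP; split; apply/mapP => -[[|c cs'] //].
  + rewrite (mem_map (f := cons 1)) => [|? ? []] //; rewrite IH.
    rewrite -[[:: 1 & cs]]/(incr_head [:: 0 & cs]) (mem_map incr_head_inj) IH.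
    by rewrite orbF /is_composition /= add1n eqSS.
  + have /negbTE -> : c.+2 :: cs \notin map (cons 1) (compositions n.+1).
      by apply/mapP => -[].
    rewrite -[[:: c.+2 & cs]]/(incr_head [:: c.+1 & cs]).
    rewrite (mem_map incr_head_inj).
    by rewrite IH /is_composition /= !addSn.
Qed.

Lemma size_compositions n : 0 < n -> size (compositions n) = 2 ^ n.-1.
Proof.
elim: n => [|[|n] IH] // _.
by rewrite compositionsSS size_cat !size_map IH // addnn -mul2n -expnS.
Qed.

Lemma uniq_compositions n : uniq (compositions n).
Proof.
elim: n => [|[|n] IH] //.
rewrite compositionsSS cat_uniq (map_inj_uniq incr_head_inj) IH andbT.
rewrite (map_inj_uniq (f := cons 1)) => [|? ? []] //; rewrite IH andTb.
apply/hasPn => _ /mapP[[|[|c] cs] cs_in ->].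
- by rewrite mem_compositions in cs_in.
- by rewrite mem_compositions in cs_in.
- by apply/mapP => -[].
Qed.

Fixpoint composition_signature (cs : seq nat) : seq nat :=
  if cs is c :: cs' then nseq c (sumn cs) ++ composition_signature cs'
  else [::].

Lemma size_composition_signature cs : size (composition_signature cs) = sumn cs.
Proof. by elim: cs => //= c cs IH; rewrite size_cat size_nseq IH. Qed.

Lemma composition_signature_le cs :
  all (fun v => v <= sumn cs) (composition_signature cs).
Proof.
elim: cs => //= c cs IH; rewrite all_cat all_nseq leqnn orbT /=.
by apply: sub_all IH => v /leq_trans; apply; rewrite leq_addl.
Qed.

Lemma count_composition_signature c cs :
  0 < c -> count_mem (c + sumn cs) (composition_signature (c :: cs)) = c.
Proof.
move=> c_gt0; rewrite /= count_cat count_nseq /= eqxx mul1n.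
suff /count_memPn -> : c + sumn cs \notin composition_signature cs.
  by rewrite addn0.
apply/negP => /(allP (composition_signature_le cs)); lia.
Qed.

Lemma composition_signature_inj :
  {in [pred cs | all (fun c => 0 < c) cs] &, injective composition_signature}.
Proof.
elim=> [|c1 cs1 IH] [|c2 cs2] //.
- by move=> _ /andP[]; case: c2.
- by move=> /andP[]; case: c1.
move=> /andP[c1_gt0 pos1] /andP[c2_gt0 pos2] E.
have sum_eq : c1 + sumn cs1 = c2 + sumn cs2.
  by have := congr1 size E; rewrite !size_composition_signature.
have c_eq : c1 = c2.
  by rewrite -(count_composition_signature c1 cs1 c1_gt0) E sum_eq
    count_composition_signature.
move: E; rewrite -c_eq => /(congr1 (drop c1)).
rewrite !drop_size_cat ?size_nseq //.
by move/IH => -> //; rewrite -c_eq.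
Qed.

Lemma composition_of_game s k rolls :
  finite_game s k rolls ->
  exists2 cs, is_composition k cs &
    signature k rolls = composition_signature cs.
Proof.
elim: rolls k => [|r rs IH] k /=; first by move/eqP->; exists [::].
case/and4P=> _ /eqP size_r _ /IH[cs /andP[pos /eqP sum_cs] ->].
have c_le : count_mem k r <= k by rewrite -size_r count_size.
have [c_eq0 | c_gt0] := posnP (count_mem k r).
  by exists cs; rewrite /is_composition ?pos ?sum_cs c_eq0 ?subn0 ?eqxx.
exists (count_mem k r :: cs); last by rewrite /= sum_cs subnKC.
by rewrite /is_composition /= c_gt0 pos sum_cs subnKC ?eqxx.
Qed.

Fixpoint composition_game (cs : seq nat) : seq (seq nat) :=
  if cs is c :: cs' then
    (nseq c (sumn cs) ++ nseq (sumn cs') 1) :: composition_game cs'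
  else [::].

Lemma count_composition_roll c m :
  0 < c -> count_mem (c + m) (nseq c (c + m) ++ nseq m 1) = c.
Proof.
move=> c_gt0; rewrite count_cat !count_nseq /= eqxx mul1n.
case: m => [|m]; first by rewrite muln0 addn0.
have -> : (1 == c + m.+1) = false by apply/eqP; lia.
by rewrite mul0n addn0.
Qed.

Lemma composition_game_finite s cs :
  all (fun c => 0 < c) cs -> sumn cs <= s ->
  finite_game s (sumn cs) (composition_game cs).
Proof.
elim: cs => //= c cs IH /andP[c_gt0 pos] le_s.
rewrite count_composition_roll // addKn IH // ?andbT; last by lia.
rewrite size_cat !size_nseq eqxx all_cat !all_nseq /=; lia.
Qed.

Lemma signature_composition_game cs :
  all (fun c => 0 < c) cs ->
  signature (sumn cs) (composition_game cs) = composition_signature cs.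
Proof.
elim: cs => //= c cs IH /andP[c_gt0 pos].
by rewrite count_composition_roll // addKn IH.
Qed.

Lemma is_signatureP n s sg :
  n <= s ->
  is_signature n s sg <->
  exists2 cs, is_composition n cs & sg = composition_signature cs.
Proof.
move=> le_ns; split=> [[rolls [game <-]] | [cs /andP[pos /eqP sum_cs] ->]].
  exact: composition_of_game game.
rewrite -sum_cs in le_ns *; exists (composition_game cs); split.
- exact: composition_game_finite.
- exact: signature_composition_game.
Qed.

Theorem proposition2p7 (n s : nat) (hn : 1 <= n) (hsn : n <= s) :
  exists S : seq (seq nat),
    [/\ uniq S, size S = 2 ^ (n - 1) &
        forall sg : seq nat, sg \in S <-> is_signature n s sg].
Proof.
exists (map composition_signature (compositions n)); split.
- rewrite map_inj_in_uniq ?uniq_compositions //.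
  apply: sub_in2 composition_signature_inj => cs.
  by rewrite mem_compositions inE => /andP[].
- by rewrite size_map size_compositions // subn1.
- move=> sg; rewrite is_signatureP //; split.
  + by case/mapP=> cs; rewrite mem_compositions; exists cs.
  + by case=> cs; rewrite -mem_compositions => cs_in ->; apply: map_f.
Qed.
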